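(* Let $(A,\vee,\wedge,\bot,\top)$ be a bounded distributive lattice, and let $\mathcal{L}=(Expr_{\mathcal{L}},Th_{\mathcal{L}},\mathcal{C}_{\mathcal{L}})$ with $Expr_{\mathcal{L}}=A$, $Th_{\mathcal{L}}$ the set of proper filters of $A$, and $\mathcal{C}_{\mathcal{L}}=\{\vee,\wedge,\bot,\top\}$. Then $\mathcal{L}$ is a distributive abstract logic.
   Context: An abstract logic is a triple $\mathcal{L}=(Expr_{\mathcal{L}},Th_{\mathcal{L}},\mathcal{C}_{\mathcal{L}})$ where $Expr_{\mathcal{L}}$ is a set, $Th_{\mathcal{L}}$ a non-empty set of subsets of $Expr_{\mathcal{L}}$ (theories) with $\bigcap\mathcal{T}\in Th_{\mathcal{L}}$ for every non-empty $\mathcal{T}\subseteq Th_{\mathcal{L}}$, and $\mathcal{C}_{\mathcal{L}}$ a set of operations on $Expr_{\mathcal{L}}$. $\mathcal{L}$ is closed under union of chains if the union of every non-empty chain of theories is a theory. A theory $T$ is totally prime if whenever $T=\bigcap\mathcal{T}$ for a non-empty $\mathcal{T}\subseteq Th_{\mathcal{L}}$ (of any cardinality), $T\in\mathcal{T}$; $TPTh_{\mathcal{L}}$ is the set of totally prime theories. A distributive abstract logic is an abstract logic closed under union of chains with binary connectives $\vee,\wedge\in\mathcal{C}_{\mathcal{L}}$ such that for all $a,b$ and all $T\in TPTh_{\mathcal{L}}$: $a\vee b\in T$ iff $a\in T$ or $b\in T$; $a\wedge b\in T$ iff $a\in T$ and $b\in T$. *)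

From HB Require Import structures.
From mathcomp Require Import all_boot all_order.
From mathcomp Require Import boolp classical_sets.

Set Implicit Arguments.
Unset Strict Implicit.
Unset Printing Implicit Defensive.

Import Order.TTheory.
Local Open Scope classical_set_scope.

Definition operation (E : Type) := {n : nat & ('I_n -> E) -> E}.

Definition op0 (E : Type) (c : E) : operation E :=
  existT (fun n => ('I_n -> E) -> E) 0 (fun _ => c).
Definition op2 (E : Type) (f : E -> E -> E) : operation E :=
  existT (fun n => ('I_n -> E) -> E) 2
    (fun v => f (v ord0) (v (@Ordinal 2 1 isT))).

Definition abstract_logic (E : Type) (Th : set (set E)) (C : set (operation E))
  : Prop :=
  Th !=set0 /\
  forall F : set (set E), F !=set0 -> F `<=` Th -> Th (\bigcap_(T in F) T).

Definition closed_under_union_of_chains (E : Type) (Th : set (set E)) : Prop :=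
  forall F : set (set E), F !=set0 -> F `<=` Th ->
    (forall T1 T2, F T1 -> F T2 -> T1 `<=` T2 \/ T2 `<=` T1) ->
    Th (\bigcup_(T in F) T).

Definition totally_prime (E : Type) (Th : set (set E)) (T : set E) : Prop :=
  Th T /\
  forall F : set (set E), F !=set0 -> F `<=` Th ->
    T = \bigcap_(U in F) U -> F T.

Definition distributive_abstract_logic (E : Type) (Th : set (set E))
  (C : set (operation E)) : Prop :=
  abstract_logic Th C /\ closed_under_union_of_chains Th /\
  exists (vee wedge : E -> E -> E),
    C (op2 vee) /\ C (op2 wedge) /\
    forall (a b : E) (T : set E), totally_prime Th T ->
      (T (vee a b) <-> T a \/ T b) /\ (T (wedge a b) <-> T a /\ T b).

Definition lattice_filter (d : Order.disp_t) (L : latticeType d) (F : set L)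
  : Prop :=
  F !=set0 /\
  (forall x y : L, F x -> (x <= y)%O -> F y) /\
  (forall x y : L, F x -> F y -> F (Order.meet x y)).

Definition proper_filter (d : Order.disp_t) (L : latticeType d) (F : set L)
  : Prop :=
  lattice_filter F /\ F <> setT.

Definition lattice_connectives (d : Order.disp_t) (L : tbLatticeType d)
  : set (operation L) :=
  [set op2 (@Order.join d L); op2 (@Order.meet d L);
       op0 (@Order.bottom d L); op0 (@Order.top d L)].

From HB Require Import structures.
From mathcomp Require Import all_boot all_order.
From mathcomp Require Import boolp classical_sets.

(* Every
   filter contains [a `&` b] iff it contains [a] and [b], and [a `|` b] as soon
   as it contains [a] or [b].  The converse for joins uses distributivity: if
   [a `|` b] lies in the filter [T], then [T] is the intersection of the
   filters generated by [T] with [a] and with [b]; when [T] contains neither,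
   both are proper, so total primality forces [T] to be one of them. *)

Set Implicit Arguments.
Unset Strict Implicit.
Unset Printing Implicit Defensive.
Import Order.TTheory.
Local Open Scope classical_set_scope.
Local Open Scope order_scope.

Section LatticeFilter.
Variables (d : Order.disp_t) (L : latticeType d).

Lemma bigcup_chain_lattice_filter (F : set (set L)) :
  F !=set0 -> (forall T, F T -> lattice_filter T) ->
  (forall T1 T2, F T1 -> F T2 -> T1 `<=` T2 \/ T2 `<=` T1) ->
  lattice_filter (\bigcup_(T in F) T).
Proof.
move=> [T0 FT0] filterF chainF; split; last split.
- by have [[x T0x] _] := filterF _ FT0; exists x, T0.
- move=> x y [T FT Tx] le_xy; exists T => //.
  by have [_ [upT _]] := filterF _ FT; apply: upT le_xy.
- move=> x y [T1 FT1 T1x] [T2 FT2 T2y].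
  have [T1T2|T2T1] := chainF _ _ FT1 FT2.
    exists T2 => //; have [_ [_ meetT]] := filterF _ FT2.
    exact: meetT (T1T2 _ T1x) T2y.
  exists T1 => //; have [_ [_ meetT]] := filterF _ FT1.
  exact: meetT T1x (T2T1 _ T2y).
Qed.

End LatticeFilter.

Section BoundedLatticeFilter.
Variables (d : Order.disp_t) (L : tbLatticeType d).

Lemma lattice_filter_top (T : set L) : lattice_filter T -> T \top.
Proof. by case=> [[x Tx] [upT _]]; apply: upT Tx (lex1 x). Qed.

Lemma proper_filterP (T : set L) :
  proper_filter T <-> lattice_filter T /\ ~ T \bot.
Proof.
split=> [[filterT TnT]|[filterT Tn0]]; last first.
  by split=> // TT; apply: Tn0; rewrite TT.
split=> // T0; have [_ [upT _]] := filterT; apply: TnT.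
by apply/seteqP; split=> // x _; apply: upT T0 (le0x x).
Qed.

Lemma top_proper_filter : \bot <> \top :> L -> proper_filter [set \top : L].
Proof.
move=> bot_neq_top; apply/proper_filterP; split; last exact: bot_neq_top.
split; first by exists \top.
split; first by move=> x y -> le_top_y; apply/eqP; rewrite eq_le lex1.
by move=> x y -> ->; rewrite meetxx.
Qed.

Lemma bigcap_lattice_filter (F : set (set L)) :
  (forall T, F T -> lattice_filter T) -> lattice_filter (\bigcap_(T in F) T).
Proof.
move=> filterF; split; last split.
- by exists \top => T FT; apply: lattice_filter_top (filterF _ FT).
- move=> x y Fx le_xy T FT.
  by have [_ [upT _]] := filterF _ FT; apply: upT (Fx _ FT) le_xy.
- move=> x y Fx Fy T FT.
  by have [_ [_ meetT]] := filterF _ FT; apply: meetT (Fx _ FT) (Fy _ FT).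
Qed.

Lemma bigcap_proper_filter (F : set (set L)) :
  F !=set0 -> F `<=` @proper_filter d L -> proper_filter (\bigcap_(T in F) T).
Proof.
move=> [T0 FT0] properF; apply/proper_filterP; split.
  by apply: bigcap_lattice_filter => T /properF [].
by move=> F0; have /proper_filterP[_] := properF _ FT0; apply; apply: F0.
Qed.

Lemma bigcup_chain_proper_filter (F : set (set L)) :
  F !=set0 -> F `<=` @proper_filter d L ->
  (forall T1 T2, F T1 -> F T2 -> T1 `<=` T2 \/ T2 `<=` T1) ->
  proper_filter (\bigcup_(T in F) T).
Proof.
move=> F_neq0 properF chainF; apply/proper_filterP; split.
  by apply: bigcup_chain_lattice_filter => // T /properF [].
by case=> T /properF /proper_filterP[_].
Qed.

Lemma lattice_filter_meet (T : set L) a b :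
  lattice_filter T -> T (a `&` b) <-> T a /\ T b.
Proof.
case=> _ [upT meetT]; split; last by case; apply: meetT.
by move=> Tab; split; apply: upT Tab _; rewrite ?leIl ?leIr.
Qed.

Lemma lattice_filter_joinW (T : set L) a b :
  lattice_filter T -> T a \/ T b -> T (a `|` b).
Proof.
case=> _ [upT _] [Ta|Tb]; first by apply: upT Ta _; apply: leUl.
by apply: upT Tb _; apply: leUr.
Qed.

End BoundedLatticeFilter.

Section DistrLatticeFilter.
Variables (d : Order.disp_t) (L : tbDistrLatticeType d).

Definition adjoin_filter (T : set L) (a : L) : set L :=
  [set x | exists2 t, T t & t `&` a <= x].

Lemma adjoin_lattice_filter (T : set L) a :
  lattice_filter T -> lattice_filter (adjoin_filter T a).
Proof.
move=> filterT; have [_ [_ meetT]] := filterT; split; last split.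
- by exists \top, \top; [apply: lattice_filter_top|apply: lex1].
- by move=> x y [t Tt le_x] le_xy; exists t => //; apply: le_trans le_x le_xy.
move=> x y [t1 Tt1 le_x] [t2 Tt2 le_y]; exists (t1 `&` t2); first exact: meetT.
rewrite lexI; apply/andP; split.
  by apply: le_trans le_x; apply: leI2 => //; apply: leIl.
by apply: le_trans le_y; apply: leI2 => //; apply: leIr.
Qed.

Lemma adjoin_filter_sub (T : set L) a : T `<=` adjoin_filter T a.
Proof. by move=> x Tx; exists x => //; apply: leIl. Qed.

Lemma adjoin_filter_mem (T : set L) a :
  lattice_filter T -> adjoin_filter T a a.
Proof. by move=> filterT; exists \top; [apply: lattice_filter_top|apply: leIr]. Qed.

Lemma adjoin_filter_join (T : set L) a b : lattice_filter T -> T (a `|` b) ->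
  T = (adjoin_filter T a `&` adjoin_filter T b)%classic.
Proof.
case=> _ [upT meetT] Tab; apply/seteqP; split.
  by move=> x Tx; split; apply: adjoin_filter_sub.
move=> x [[t1 Tt1 le_x1] [t2 Tt2 le_x2]].
have Tt : T (t1 `&` t2) by apply: meetT.
apply: (upT ((t1 `&` t2) `&` (a `|` b))); first exact: meetT.
rewrite meetUr leUx; apply/andP; split.
  by apply: le_trans le_x1; apply: leI2 => //; apply: leIl.
by apply: le_trans le_x2; apply: leI2 => //; apply: leIr.
Qed.

Lemma totally_prime_filter_join (T : set L) a b :
  totally_prime (@proper_filter d L) T -> T (a `|` b) -> T a \/ T b.
Proof.
move=> [[filterT _] primeT] Tab; apply: contrapT => /not_orP[Tna Tnb].
have T_eq := adjoin_filter_join filterT Tab.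
have proper_adjoin x y : T = (adjoin_filter T x `&` adjoin_filter T y)%classic ->
    ~ T y -> proper_filter (adjoin_filter T x).
  move=> T_xy Tny; split; first exact: adjoin_lattice_filter.
  by move=> Tx_full; apply: Tny; rewrite T_xy Tx_full setTI; apply: adjoin_filter_mem.
have properFab : [set adjoin_filter T a; adjoin_filter T b] `<=` @proper_filter d L.
  move=> U [->|->]; first exact: proper_adjoin T_eq Tnb.
  by apply: proper_adjoin Tna; rewrite setIC.
have T_bigcap : T = \bigcap_(U in [set adjoin_filter T a; adjoin_filter T b]) U.
  rewrite {1}T_eq; apply/seteqP; split; first by move=> x [? ?] U [->|->].
  by move=> x Fx; split; apply: Fx; [left|right].
have [] := primeT _ (ex_intro _ _ (or_introl erefl)) properFab T_bigcap => T_adj.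
  by apply: Tna; rewrite T_adj; apply: adjoin_filter_mem.
by apply: Tnb; rewrite T_adj; apply: adjoin_filter_mem.
Qed.

End DistrLatticeFilter.

Theorem lemma3p8 (d : Order.disp_t) (A : tbDistrLatticeType d)
  (nontriv : (@Order.bottom d A) <> (@Order.top d A)) :
  distributive_abstract_logic (@proper_filter d A) (@lattice_connectives d A).
Proof.
split; first split.
- by exists [set \top]; apply: top_proper_filter.
- exact: bigcap_proper_filter.
split; first exact: bigcup_chain_proper_filter.
exists Order.join, Order.meet; split; first by left; left; left.
split; first by left; left; right.
move=> a b T primeT; have filterT := primeT.1.1.
split; last exact: lattice_filter_meet.
split; first exact: totally_prime_filter_join.
exact: lattice_filter_joinW.
Qed.
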